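(* Let $H$ be a finite simple graph on $n\ge 2$ vertices and $G=w(H)$. Let $f_i$ denote the number of $i$-dimensional faces of $\operatorname{Ind}(G)$. Then $f_{n-2}\ge f_{n-1}$.
   Context: For a graph $H$ with vertex set $\{x_1,\dots,x_n\}$, the whiskered graph $w(H)$ has vertex set $\{x_1,\dots,x_n,y_1,\dots,y_n\}$ and edge set $E(H)\cup\{\{x_i,y_i\}: i=1,\dots,n\}$. The independence complex $\operatorname{Ind}(G)$ is the simplicial complex whose faces are the independent sets of $G$ (sets containing no edge); a face $F$ has dimension $|F|-1$. *)

From mathcomp Require Import all_boot.
Set Implicit Arguments. Unset Strict Implicit. Unset Printing Implicit Defensive.

Definition simple_graph (T : finType) (e : rel T) : Prop :=
  symmetric e /\ irreflexive e.

(* Whiskered graph w(H): vertices x_i = inl i, y_i = inr i. *)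
Definition whisker (n : nat) (e : rel 'I_n) : rel ('I_n + 'I_n) :=
  fun u v => match u, v with
  | inl i, inl j => e i j
  | inl i, inr j => i == j
  | inr i, inl j => i == j
  | inr _, inr _ => false
  end.

Definition independent (T : finType) (g : rel T) (F : {set T}) : bool :=
  [forall u in F, forall v in F, ~~ g u v].

(* Number of i-dimensional faces (faces with i+1 vertices) of Ind(g). *)
Definition fvec (T : finType) (g : rel T) (i : nat) : nat :=
  #|[set F : {set T} | independent g F & #|F| == i.+1]|.

From mathcomp Require Import all_boot.
Set Implicit Arguments. Unset Strict Implicit. Unset Printing Implicit Defensive.

(* An independent set of w(H) never contains both x_i and y_i,
   since {x_i, y_i} is an edge; so a face with n vertices (a facet) contains
   exactly one of them for every i, and is determined by which x_i it contains.
   We inject facets into (n-2)-faces: fix two distinct vertices i0, i1 and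
   delete from a facet F its vertex of index i0 if F treats i0 and i1 alike
   (both x's or both y's), and its vertex of index i1 otherwise.  The deleted
   index is recovered from the image as the only index it misses, and the
   deleted vertex is then recovered from the surviving index (i1 or i0).
   Note that the argument never uses that H is simple. *)

Section Independent.
Variables (T : finType) (g : rel T).

Lemma independentP (F : {set T}) :
  reflect (forall u v, u \in F -> v \in F -> ~~ g u v) (independent g F).
Proof.
apply: (iffP forall_inP) => [H u v uF vF | H u uF].
  by move/forall_inP: (H u uF); apply.
by apply/forall_inP => v; apply: H.
Qed.

Lemma independentS (F G : {set T}) :
  F \subset G -> independent g G -> independent g F.
Proof.
move=> /subsetP sFG /independentP indG; apply/independentP => u v uF vF.
by apply: indG; apply: sFG.
Qed.

End Independent.

Definition pivot (T : eqType) (i0 i1 : T) (b : T -> bool) : T :=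
  if b i0 == b i1 then i0 else i1.

(* A pattern is determined by its pivot and its values away from the pivot:
   the value at the pivot is read off at the other point. *)
Lemma pivot_determines (T : eqType) (i0 i1 : T) (b c : T -> bool) :
  i0 != i1 -> pivot i0 i1 b = pivot i0 i1 c ->
  (forall k, k != pivot i0 i1 b -> b k = c k) -> b =1 c.
Proof.
move=> ne01 Epiv Eoff k.
have [-> | nek] := eqVneq k (pivot i0 i1 b); last exact: Eoff.
have ne10 : i1 != i0 by rewrite eq_sym.
move: Epiv Eoff; rewrite /pivot.
case: (eqVneq (b i0) (b i1)) => Eb; case: (eqVneq (c i0) (c i1)) => Ec //.
- by move=> _ /(_ i1 ne10); rewrite Eb Ec.
- 1,2: by move=> E; move: ne01; rewrite E eqxx.
- move=> _ /(_ i0 ne01) E0; move: Eb Ec; rewrite E0.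
  by case: (c i0); case: (b i1); case: (c i1).
Qed.

Section WhiskerFacets.
Variables (n : nat) (e : rel 'I_n).
Local Notation W := (whisker e).

Definition facet (F : {set 'I_n + 'I_n}) := independent W F && (#|F| == n).

Definition index_of (u : 'I_n + 'I_n) : 'I_n :=
  match u with inl i => i | inr i => i end.

(* The whisker {x_i, y_i} is an edge, so no independent set contains both. *)
Lemma whisker_excl (F : {set 'I_n + 'I_n}) i :
  independent W F -> inl i \in F -> inr i \notin F.
Proof.
by move=> /independentP indF xF; apply/negP => /(indF _ _ xF); rewrite /= eqxx.
Qed.

(* A facet contains exactly one vertex of each whisker: the index map is
   injective on it, hence onto 'I_n by counting. *)
Lemma facet_complement (F : {set 'I_n + 'I_n}) i :
  facet F -> (inr i \in F) = (inl i \notin F).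
Proof.
case/andP=> indF /eqP cardF.
have inj : {in F &, injective index_of}.
  move=> [a|a] [b|b] uF vF /= Eab; rewrite -{b}Eab in vF * => //.
  - by have := whisker_excl indF uF; rewrite vF.
  - by have := whisker_excl indF vF; rewrite uF.
have : i \in index_of @: F.
  suff -> : index_of @: F = setT by rewrite inE.
  by apply/eqP; rewrite eqEcard subsetT cardsT card_ord (card_in_imset inj) cardF leqnn.
case/imsetP=> -[a|a] aF /= ->.
  by rewrite aF; apply/negbTE/whisker_excl.
by rewrite aF; apply/esym/negP => /(whisker_excl indF); rewrite aF.
Qed.

Definition facet_vertex (F : {set 'I_n + 'I_n}) i :=
  if inl i \in F then inl i else inr i.

Lemma facet_vertex_in (F : {set 'I_n + 'I_n}) i :
  facet F -> facet_vertex F i \in F.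
Proof.
by rewrite /facet_vertex => fF; case: ifPn => // xF; rewrite facet_complement.
Qed.

Lemma drop_vertex_inl (F : {set 'I_n + 'I_n}) i k :
  (inl k \in F :\ facet_vertex F i) = (k != i) && (inl k \in F).
Proof.
rewrite !inE /facet_vertex; case: (eqVneq k i) => [->|nki].
  by case: ifP => xF; rewrite ?eqxx ?xF.
by case: ifP => _ //=; rewrite (inj_eq (@inl_inj _ _)) nki.
Qed.

Lemma drop_vertex_covers (F : {set 'I_n + 'I_n}) i k :
  facet F ->
  (inl k \in F :\ facet_vertex F i) || (inr k \in F :\ facet_vertex F i)
  = (k != i).
Proof.
move=> fF; rewrite drop_vertex_inl !inE facet_complement // /facet_vertex.
case: (eqVneq k i) => [->|nki] /=; first by case: ifP => xF; rewrite ?eqxx ?xF.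
by case: ifP => _ /=; rewrite ?(inj_eq (@inr_inj _ _)) ?nki; case: (inl k \in F).
Qed.

Lemma facet_eq (F G : {set 'I_n + 'I_n}) :
  facet F -> facet G -> (forall k, (inl k \in F) = (inl k \in G)) -> F = G.
Proof.
move=> fF fG Ex; apply/setP => -[k|k]; first exact: Ex.
by rewrite !facet_complement // Ex.
Qed.

Variables i0 i1 : 'I_n.
Hypothesis ne01 : i0 != i1.

Definition drop_index (F : {set 'I_n + 'I_n}) : 'I_n :=
  pivot i0 i1 (fun k => inl k \in F).

Definition drop_facet (F : {set 'I_n + 'I_n}) : {set 'I_n + 'I_n} :=
  F :\ facet_vertex F (drop_index F).

(* Injectivity: the image determines the deleted index (its only missing
   index), hence the x's of F away from it, hence F by pivot_determines. *)
Lemma drop_facet_inj : {in facet &, injective drop_facet}.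
Proof.
move=> F G fF fG EFG.
have Eidx : drop_index F = drop_index G.
  have := @drop_vertex_covers F (drop_index F) (drop_index F) fF.
  rewrite eqxx -/(drop_facet F) EFG /drop_facet drop_vertex_covers //.
  by move/negbFE/eqP.
apply: facet_eq => //; apply: (pivot_determines ne01 Eidx) => k nk.
move/setP: EFG => /(_ (inl k)).
by rewrite /drop_facet !drop_vertex_inl -Eidx nk.
Qed.

Lemma facets_le_ridges :
  #|[set F | independent W F & #|F| == n]|
  <= #|[set F | independent W F & #|F| == n.-1]|.
Proof.
have facetE : [set F | independent W F & #|F| == n] = [set F | facet F].
  by apply/setP => F; rewrite !inE.
rewrite facetE -(card_in_imset (f := drop_facet)); last first.
  by move=> F G; rewrite !inE; apply: drop_facet_inj.
apply/subset_leq_card/subsetP => G /imsetP [F]; rewrite inE => fF ->{G}.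
have /andP [indF /eqP cardF] := fF.
rewrite inE (independentS _ indF) ?subD1set //=.
move: cardF; rewrite (cardsD1 (facet_vertex F (drop_index F))) facet_vertex_in //.
by rewrite add1n => /(congr1 predn) <-.
Qed.

End WhiskerFacets.

Theorem mainTheorem2 (n : nat) (e : rel 'I_n) :
  simple_graph e -> 2 <= n ->
  fvec (whisker e) (n - 1) <= fvec (whisker e) (n - 2).
Proof.
case: n e => [|[|m]] e // _ _.
rewrite /fvec !subSS !subn0.
exact: (@facets_le_ridges m.+2 e ord0 (@Ordinal m.+2 1 isT)).
Qed.
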